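(* Consider, on the reference element $E=[-1,1]^3$ of a moving curved hexahedral element, the split form ALE discontinuous Galerkin spectral element semi-discretization of the three-dimensional compressible Euler equations described in the context, with time-differentiable nodal values $\mathcal{J}_{ijk}(\tau)$ and $\mathbf{U}_{ijk}(\tau)$. Suppose the volume flux functions $\mathbf{G}^{\#}_\iota$ and the surface flux functions $\mathbf{G}^{*}_\iota$, $\iota=1,2,3$, satisfy Jameson's conditions $$\mathbf{G}^{\upsilon+1,\#}_\iota=\mathbf{G}^{1,\#}_\iota\{\{u_\upsilon\}\}+\{\{p\}\}\,\delta_{\iota\upsilon},\qquad \mathbf{G}^{\upsilon+1,*}_\iota=\mathbf{G}^{1,*}_\iota\{\{u_\upsilon\}\}+\{\{p\}\}^{\star}\,\delta_{\iota\upsilon},\qquad \upsilon=1,2,3,$$ where $\{\{p\}\}^{\star}$ can be any consistent numerical trace approximation of the pressure (in the volume condition the averages are taken of the two nodal states entering $\mathbf{G}^{\#}_\iota$, in the surface condition of the interior and exterior states), and the Cartesian surface mass fluxes $\mathbf{G}^{1,*}_\iota$ are consistent with $\rho(u_\iota-\nu_\iota)$, $\iota=1,2,3$. Then for every element the scheme satisfies $$\frac{\partial}{\partial\tau}\big\langle I^N(\Bbbk),\mathcal{J}\big\rangle_N=-\frac12\sum_{\iota=1}^3\Big\langle \Big(\frac{\partial I^N(p)}{\partial\xi^\iota}\Big)\mathbb{J}\vec a^{\,\iota}+p\Big(\frac{\partial I^N(\mathbb{J}\vec a^{\,\iota})}{\partial\xi^\iota}\Big)+\Big(\frac{\partial I^N(p\,\mathbb{J}\vec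 a^{\,\iota})}{\partial\xi^\iota}\Big),\vec u\Big\rangle_N-\sum_{\iota=1}^3\int_{\partial E,N}\hat s\,n_\iota\Big[\tfrac12\overline{|\vec u|}^{2}\,\mathbf{G}^{1,*}_\iota+\big(\{\{p\}\}^{\star}-p^-\big)u_\iota^-\Big]\,dS,$$ where $\Bbbk=\frac12\rho|\vec u|^2$ is the kinetic energy, $\overline{|\vec u|}^{2}:=\sum_{\iota=1}^3\big(2\{\{u_\iota\}\}^2-\{\{u_\iota^2\}\}\big)$, and $u_\iota^-$, $p^-$ are the interior (own-element) values at the surface nodes.
   Context: Euler setting: state $\mathbf{u}=[\rho,\rho\vec u,\rho e+\tfrac12\rho|\vec u|^2]^T\in\mathbb{R}^5$ with density $\rho$, velocity $\vec u=(u_1,u_2,u_3)$, pressure $p$, $e=p/((\gamma-1)\rho)$, $\gamma>1$. Advective fluxes $\mathbf{f}_\iota$ ($\iota=1,2,3$) have components $\mathbf{f}^1_\iota=\rho u_\iota$, $\mathbf{f}^{\upsilon+1}_\iota=\rho u_\iota u_\upsilon+p\delta_{\iota\upsilon}$ ($\upsilon=1,2,3$), $\mathbf{f}^5_\iota=\rho u_\iota(e+\frac12|\vec u|^2)+pu_\iota$; superscripts $1,\dots,5$ denote components. $\vec\nu=(\nu_1,\nu_2,\nu_3)$ is the prescribed grid velocity. Discretization: $\{\xi_i\}_{i=0}^N$ are the Legendre–Gauss–Lobatto (LGL) nodes on $[-1,1]$ ($\xi_0=-1,\xi_N=1$) with weights $\omega_i$, $\ell_j$ the Lagrange polynomials on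 them, $\mathcal{D}_{ij}=\ell_j'(\xi_i)$; $\omega_{ijk}=\omega_i\omega_j\omega_k$. All quantities are represented by nodal values at the tensor LGL nodes $(\xi_i,\xi_j,\xi_k)$; $I^N(g)=\sum_{ijk}g_{ijk}\ell_i(\xi^1)\ell_j(\xi^2)\ell_k(\xi^3)$ is tensor-product interpolation, and derivatives $\partial/\partial\xi^\iota$ are exact derivatives of interpolants. Discrete inner product: $\langle \mathbf f,\mathbf g\rangle_N=\sum_{i,j,k=0}^N\omega_{ijk}\mathbf f_{ijk}^T\mathbf g_{ijk}$ (also for scalar or 3-vector valued functions). Discrete surface integral: for $h$ defined at surface nodes (possibly depending on the outward reference normal $\hat n=(\hat n^1,\hat n^2,\hat n^3)$ of the face), $\int_{\partial E,N}h\,dS$ is the sum over the six faces of $E$ of the tensor LGL quadrature (weights $\omega$ in the two tangential directions) of $h$ at the face nodes; for fluxes, $\int_{\partial E,N}\boldsymbol\varphi^T\mathbf F_1\hat n^1dS=\sum_{j,k}\omega_j\omega_k(\boldsymbol\varphi_{Njk}^T(\mathbf F_1)_{Njk}-\boldsymbol\varphi_{0jk}^T(\mathbf F_1)_{0jk})$ and analogously in directions 2, 3. $\mathcal{J}_{ijk}(\tau)$ are nodal values of the discrete Jacobian; $\mathbb{J}\vec a^{\,\iota}$ ($\iota=1,2,3$) are discrete volume-weighted contravariant vectors with Cartesian components $\mathbb{J}a^\iota_\beta$; on faces, $\hat s=|\sum_\iota \mathbb{J}\vec a^{\,\iota}\hat n^\iota|$ and $\vec n=\hat s^{-1}\sum_\iota\mathbb{J}\vec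 a^{\,\iota}\hat n^\iota$. The nodal state $\mathbf{U}_{ijk}$ determines nodal $\rho,\vec u,p,e$; $\mathbf{F}_\iota(\mathbf U)$ is $\mathbf f_\iota$ evaluated at nodes and $\mathbf{G}_\iota=\mathbf F_\iota(\mathbf U)-\nu_\iota\mathbf U$. Averages/jumps: for nodal pairs, $\{\{a\}\}_{(i,m)jk}=\frac12(a_{ijk}+a_{mjk})$ (analogously in $j$, $k$); at surface nodes, with ''$-$'' the own-element value and ''$+$'' the neighbor's value, $\{\{a\}\}=\frac12(a^++a^-)$, $[\![a]\!]=a^+-a^-$. Volume fluxes $\mathbf{G}^{\#}_\iota(\vec\nu_L,\vec\nu_R,\mathbf U_L,\mathbf U_R)\in\mathbb R^5$ are symmetric in exchanging $(\vec\nu_L,\mathbf U_L)\leftrightarrow(\vec\nu_R,\mathbf U_R)$ and consistent: $\mathbf G^{\#}_\iota(\vec\nu_L,\vec\nu_R,\mathbf U,\mathbf U)=\mathbf F_\iota(\mathbf U)-\{\{\nu_\iota\}\}\mathbf U$. Volume operator at node $ijk$: $\mathbb{D}\cdot\tilde{\mathbf G}^{\#}_{ijk}=\sum_{m=0}^N\sum_{\beta=1}^3\big[2\mathcal D_{im}\mathbf G^{\#}_\beta(\vec\nu_{ijk},\vec\nu_{mjk},\mathbf U_{ijk},\mathbf U_{mjk})\{\{\mathbb Ja^1_\beta\}\}_{(i,m)jk}+2\mathcal D_{jm}\mathbf G^{\#}_\beta(\vec\nu_{ijk},\vec\nu_{imk},\mathbf U_{ijk},\mathbf U_{imk})\{\{\mathbb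 Ja^2_\beta\}\}_{i(j,m)k}+2\mathcal D_{km}\mathbf G^{\#}_\beta(\vec\nu_{ijk},\vec\nu_{ijm},\mathbf U_{ijk},\mathbf U_{ijm})\{\{\mathbb Ja^3_\beta\}\}_{ij(k,m)}\big]$. Surface fluxes $\mathbf G^*_\iota$ are functions of interior/exterior states; $\tilde{\mathbf G}^*_{\hat n}=\hat s\sum_\iota n_\iota\mathbf G^*_\iota$ and $\tilde{\mathbf G}_{\hat n}=\sum_\iota\hat n^\iota\sum_\beta\mathbb Ja^\iota_\beta\mathbf G_\beta$. Scheme (per element): for all $\boldsymbol\varphi$ in the tensor-product polynomials of degree $N$ with values in $\mathbb R^5$, $\big\langle \frac{\partial(\mathcal J\mathbf U)}{\partial\tau},\boldsymbol\varphi\big\rangle_N=-\langle\mathbb D\cdot\tilde{\mathbf G}^{\#},\boldsymbol\varphi\rangle_N-\int_{\partial E,N}\boldsymbol\varphi^T(\tilde{\mathbf G}^*_{\hat n}-\tilde{\mathbf G}_{\hat n})\,dS,$ coupled with an evolution equation for $\mathcal J$ (discrete geometric conservation law) $\langle\partial_\tau\mathcal J,\varphi\rangle_N=\langle\mathbb D\cdot\tilde{\vec\nu}^{\#},\varphi\rangle_N+\int_{\partial E,N}\varphi(\tilde\nu^*_{\hat n}-\tilde\nu_{\hat n})dS$, whose precise form is not used in the claim. Here $\langle I^N(\Bbbk),\mathcal J\rangle_N=\sum_{ijk}\omega_{ijk}\Bbbk_{ijk}\mathcal J_{ijk}$. *)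

From HB Require Import structures.
From mathcomp Require Import all_boot all_order all_algebra.
From mathcomp Require Import all_classical all_reals all_analysis.
Set Implicit Arguments. Unset Strict Implicit. Unset Printing Implicit Defensive.
Import Order.TTheory GRing.Theory Num.Theory.
Local Open Scope ring_scope.

Section Defs.
Variable R : realType.

(* conserved state u = [rho, rho u_1, rho u_2, rho u_3, rho e + 1/2 rho |u|^2];
   component c (paper's superscript c+1) *)
Definition state := 'I_5 -> R.
Definition vec3 := 'I_3 -> R.
Definition node (N : nat) := {ffun 'I_3 -> 'I_N.+1}.

(* component index of momentum rho u_b (paper: b+1, b=1,2,3) and of energy *)
Definition cmom (b : 'I_3) : 'I_5 := inord b.+1.
Definition cen : 'I_5 := inord 4.

Definition rho (U : state) : R := U ord0.
Definition vel (U : state) (b : 'I_3) : R := U (cmom b) / rho U.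
Definition speed2 (U : state) : R := \sum_b vel U b ^+ 2.
Definition kin (U : state) : R := 1/2 * rho U * speed2 U.
(* rho e = p/(gamma-1) and U^5 = rho e + 1/2 rho |u|^2 *)
Definition pres (gamma : R) (U : state) : R :=
  (gamma - 1) * (U cen - 1/2 * rho U * speed2 U).
Definition eint (gamma : R) (U : state) : R := pres gamma U / ((gamma - 1) * rho U).
Definition delta (a b : 'I_3) : R := (a == b)%:R.
Definition avg (a b : R) : R := (a + b) / 2.

Definition fluxF (gamma : R) (iota : 'I_3) (U : state) : state := fun c =>
  if c == ord0 then rho U * vel U iota
  else if c == cen then
    rho U * vel U iota * (eint gamma U + 1/2 * speed2 U) + pres gamma U * vel U iota
  else rho U * vel U iota * vel U (@inord 2 c.-1)
       + pres gamma U * delta iota (@inord 2 c.-1).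

(* Legendre-Gauss-Lobatto nodes/weights: N >= 1, increasing nodes with
   xi_0 = -1, xi_N = 1, and the quadrature is exact for all polynomials of
   degree <= 2N-1 (this characterizes the Gauss-Lobatto rule uniquely). *)
Definition is_LGL (N : nat) (xi w : 'I_N.+1 -> R) : Prop :=
  [/\ (0 < N)%N, xi ord0 = -1, xi ord_max = 1,
      (forall i j : 'I_N.+1, (i < j)%N -> xi i < xi j) &
      forall m : nat, (m <= 2 * N - 1)%N ->
        \sum_i w i * xi i ^+ m = (1 - (-1) ^+ m.+1) / (m.+1)%:R].

Definition lagr (N : nat) (xi : 'I_N.+1 -> R) (j : 'I_N.+1) : {poly R} :=
  \prod_(m < N.+1 | m != j) (('X - (xi m)%:P) * ((xi j - xi m)^-1)%:P).
Definition Dmat (N : nat) (xi : 'I_N.+1 -> R) (i j : 'I_N.+1) : R :=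
  (deriv (lagr xi j)).[xi i].

Definition wvol (N : nat) (w : 'I_N.+1 -> R) (x : node N) : R := \prod_b w (x b).
Definition wface (N : nat) (w : 'I_N.+1 -> R) (x : node N) (d : 'I_3) : R :=
  \prod_(b | b != d) w (x b).
Definition upd (N : nat) (x : node N) (d : 'I_3) (m : 'I_N.+1) : node N :=
  [ffun b => if b == d then m else x b].
(* nodal values of d/dxi^d of the interpolant I^N(g) *)
Definition dxi (N : nat) (xi : 'I_N.+1 -> R) (g : node N -> R) (d : 'I_3) (x : node N) : R :=
  \sum_m Dmat xi (x d) m * g (upd x d m).

Definition ip (N : nat) (w : 'I_N.+1 -> R) (f g : node N -> state) : R :=
  \sum_x wvol w x * \sum_c f x c * g x c.
Definition ip3 (N : nat) (w : 'I_N.+1 -> R) (f g : node N -> vec3) : R :=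
  \sum_x wvol w x * \sum_b f x b * g x b.

(* faces: direction d and side s (true: xi^d = +1, false: xi^d = -1) *)
Definition face_node (N : nat) (x : node N) (d : 'I_3) (s : bool) : bool :=
  x d == (if s then ord_max else ord0).
Definition sgn (s : bool) : R := if s then 1 else -1.
Definition nhat (d : 'I_3) (s : bool) (k : 'I_3) : R := if k == d then sgn s else 0.
Definition surf_int (N : nat) (w : 'I_N.+1 -> R) (h : node N -> 'I_3 -> bool -> R) : R :=
  \sum_d \sum_(s : bool) \sum_(x | face_node x d s) wface w x d * h x d s.

(* sum_iota JJa^iota hat n^iota, hat s, n at a surface node;
   Ja x iota beta = JJa^iota_beta at node x *)
Definition cvec (N : nat) (Ja : node N -> 'I_3 -> 'I_3 -> R) (x : node N) (d : 'I_3) (s : bool)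
  (beta : 'I_3) : R := \sum_k nhat d s k * Ja x k beta.
Definition shat (N : nat) (Ja : node N -> 'I_3 -> 'I_3 -> R) x d s : R :=
  Num.sqrt (\sum_beta cvec Ja x d s beta ^+ 2).
Definition nvec (N : nat) (Ja : node N -> 'I_3 -> 'I_3 -> R) x d s (beta : 'I_3) : R :=
  (shat Ja x d s)^-1 * cvec Ja x d s beta.

Definition volD (N : nat) (xi : 'I_N.+1 -> R)
  (Gsharp : 'I_3 -> vec3 -> vec3 -> state -> state -> state)
  (nu : node N -> vec3) (Ja : node N -> 'I_3 -> 'I_3 -> R) (U : node N -> state)
  (x : node N) : state := fun c =>
  \sum_m \sum_beta \sum_d
     2 * Dmat xi (x d) m * Gsharp beta (nu x) (nu (upd x d m)) (U x) (U (upd x d m)) c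
       * avg (Ja x d beta) (Ja (upd x d m) d beta).

Definition Gtn (N : nat) (gamma : R) (nu : node N -> vec3) (Ja : node N -> 'I_3 -> 'I_3 -> R)
  (U : node N -> state) (x : node N) (d : 'I_3) (s : bool) : state := fun c =>
  \sum_k nhat d s k * \sum_beta Ja x k beta * (fluxF gamma beta (U x) c - nu x beta * U x c).

Definition Gstarn (N : nat) (Gstar : 'I_3 -> vec3 -> state -> state -> state)
  (nu : node N -> vec3) (Ja : node N -> 'I_3 -> 'I_3 -> R)
  (U : node N -> state) (Uext : node N -> 'I_3 -> bool -> state)
  (x : node N) (d : 'I_3) (s : bool) : state := fun c =>
  shat Ja x d s * \sum_beta nvec Ja x d s beta * Gstar beta (nu x) (U x) (Uext x d s) c.

Definition ubar2 (Um Up : state) : R :=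
  \sum_k (2 * avg (vel Up k) (vel Um k) ^+ 2 - avg (vel Up k ^+ 2) (vel Um k ^+ 2)).

End Defs.
Arguments delta {R}.
Arguments sgn {R}.
Arguments nhat {R}.

From HB Require Import structures.
From mathcomp Require Import all_boot all_order all_algebra.
From mathcomp Require Import all_classical all_reals all_analysis.
From mathcomp Require Import zify ring.
Set Implicit Arguments. Unset Strict Implicit. Unset Printing Implicit Defensive.
Import Order.TTheory GRing.Theory Num.Theory.
Local Open Scope ring_scope.

(* Test the scheme with the nodal values of the kinetic-energy variables
   [kin_var U] = dk/dU = (-|u|^2/2, u, 0).  As k is homogeneous of degree one
   in U, the time term becomes d/dt sum_x omega_x J_x k(U_x).  By Jameson's
   condition the two-point volume flux between nodes x and y tested with
   [kin_var (U x)] splits into a mass part {{Ja}} G^1 (u_x . u_y) / 2, which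
   is symmetric in x and y, and a pressure part {{Ja}} {{p}} u_x.  The
   summation-by-parts property w_i D_im + w_m D_mi = [i = m = N] - [i = m = 0]
   of the LGL derivative matrix moves the mass part to the faces, where it
   cancels the mass part of the consistent flux [Gtn] and combines with the
   surface fluxes (again through Jameson's condition) into the surface term;
   since the rows of D sum to zero, the pressure part is the split-form
   pressure work. *)

Section LGL.
Variables (R : realType) (N : nat) (xi w : 'I_N.+1 -> R).
Hypothesis LGL : is_LGL xi w.

Lemma LGL_node_inj : injective xi.
Proof.
case: LGL => _ _ _ mono _ i j eij; apply/val_inj => /=.
by case: (ltngtP i j) => // /mono; rewrite eij ltxx.
Qed.

Lemma LGL_node_sub_neq0 i j : i != j -> xi i - xi j != 0.
Proof. by rewrite subr_eq0; apply: contra => /eqP /LGL_node_inj ->. Qed.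

Lemma lagr_node j k : (lagr xi j).[xi k] = (k == j)%:R.
Proof.
rewrite /lagr horner_prod; have [->|kj] := eqVneq k j.
  apply: big1 => m mj; rewrite hornerM hornerXsubC hornerC mulfV //.
  by rewrite LGL_node_sub_neq0 // eq_sym.
by rewrite (bigD1 k) //= hornerM hornerXsubC subrr !mul0r.
Qed.

Lemma size_lagr j : (size (lagr xi j) <= N.+1)%N.
Proof.
have lin m : m != j -> size (('X - (xi m)%:P) * ((xi j - xi m)^-1)%:P) = 2%N.
  move=> mj; rewrite mulrC mul_polyC size_scale ?size_XsubC //.
  by rewrite invr_eq0 LGL_node_sub_neq0 // eq_sym.
rewrite /lagr size_prod => [|m mj]; last by rewrite -size_poly_eq0 lin.
rewrite (eq_bigr _ lin) sum_nat_const.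
have -> : #|[pred m : 'I_N.+1 | m != j]| = N by rewrite cardC1 card_ord.
lia.
Qed.

Lemma sum_lagr : \sum_j lagr xi j = 1.
Proof.
apply/eqP; rewrite -subr_eq0; apply/negPn/negP => nz.
have := max_poly_roots nz (rs := map xi (enum 'I_N.+1)).
rewrite size_map size_enum_ord map_inj_uniq ?enum_uniq; last exact: LGL_node_inj.
have -> : all (root (\sum_j lagr xi j - 1)) [seq xi i | i <- enum 'I_N.+1].
  apply/allP => _ /mapP [k _ ->]; rewrite /root hornerD hornerN hornerC horner_sum.
  under eq_bigr do rewrite lagr_node.
  rewrite (bigD1 k) //= eqxx big1 ?addr0 ?subrr // => j.
  by rewrite eq_sym => /negbTE ->.
move=> /(_ isT isT); apply/negP; rewrite -leqNgt.
apply: leq_trans (size_polyD _ _) _; rewrite geq_max size_polyN size_polyC.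
apply/andP; split; last by case: (_ != 0).
apply: leq_trans (size_sum _ _ _) _.
by apply/bigmax_leqP => j _; apply: size_lagr.
Qed.

Lemma Dmat_row_sum i : \sum_m Dmat xi i m = 0.
Proof.
rewrite /Dmat -horner_sum -(big_morph _ (@derivD _) (deriv0 _)) sum_lagr.
by rewrite -polyC1 derivC horner0.
Qed.

Lemma LGL_quad_deriv (P : {poly R}) : (size P <= (N + N).+1)%N ->
  \sum_k w k * P^`().[xi k] = P.[1] - P.[-1].
Proof.
move=> sP; case: LGL => _ _ _ _ quad_exact.
have sP' : (size P^`() <= N + N)%N.
  have [->|nz] := eqVneq P 0; first by rewrite deriv0 size_poly0.
  by rewrite -ltnS (leq_trans (lt_size_deriv nz)).
under eq_bigr do rewrite (horner_coef_wide _ sP') mulr_sumr.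
rewrite exchange_big /= (horner_coef_wide 1 sP) (horner_coef_wide (-1) sP) -sumrB.
rewrite big_ord_recl /= expr0 subrr add0r; apply: eq_bigr => j _.
have -> : \sum_k w k * (P^`()`_j * xi k ^+ j) = P^`()`_j * \sum_k w k * xi k ^+ j.
  by rewrite mulr_sumr; apply: eq_bigr => k _; ring.
rewrite quad_exact; last by have := ltn_ord j; lia.
rewrite coef_deriv /bump /= add1n expr1n -mulr_natr.
by field; rewrite addrC natr1 pnatr_eq0.
Qed.

Lemma Dmat_SBP i m : w i * Dmat xi i m + w m * Dmat xi m i =
  ((i == m) && (i == ord_max))%:R - ((i == m) && (i == ord0))%:R.
Proof.
case: (LGL) => _ xi0 xiN _ _.
have sP : (size (lagr xi i * lagr xi m)%R <= (N + N).+1)%N.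
  apply: leq_trans (size_polyMleq _ _) _.
  by have := size_lagr i; have := size_lagr m; lia.
have -> : ((i == m) && (i == ord_max))%:R - ((i == m) && (i == ord0))%:R
    = (lagr xi i * lagr xi m).[xi ord_max] - (lagr xi i * lagr xi m).[xi ord0] :> R.
  rewrite !hornerM !lagr_node -!natrM !mulnb.
  have [<-|im] := eqVneq i m.
    by rewrite /= !andbb [ord_max == _]eq_sym [ord0 == _]eq_sym.
  have ne k : (k == i) && (k == m) = false.
    by apply: (contraNF _ im) => /andP[/eqP <- ->].
  by rewrite !ne.
rewrite xiN xi0 -LGL_quad_deriv //.
under eq_bigr do rewrite derivM hornerD !hornerM !lagr_node mulrDr.
rewrite big_split /= (bigD1 m) //= (bigD1 i (P := predT)) //= !eqxx !mulr1 !mul1r.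
rewrite !big1 ?addr0 => [|k /negbTE ->|k /negbTE ->]; by rewrite ?(mulr0, mul0r) // addrC.
Qed.

End LGL.

Section TensorNodes.
Variable N : nat.
Implicit Types (x : node N) (d : 'I_3) (m : 'I_N.+1).

Lemma upd_at x d m : upd x d m d = m.
Proof. by rewrite ffunE eqxx. Qed.

Lemma upd_id x d : upd x d (x d) = x.
Proof. by apply/ffunP => b; rewrite ffunE; case: eqP => // ->. Qed.

Lemma upd_upd x d m m' : upd (upd x d m) d m' = upd x d m'.
Proof. by apply/ffunP => b; rewrite !ffunE; case: eqP. Qed.

Lemma sum_upd_swap (V : nmodType) d (G : node N -> 'I_N.+1 -> V) :
  \sum_x \sum_m G x m = \sum_x \sum_m G (upd x d m) (x d).
Proof.
pose f (p : node N * 'I_N.+1) := (upd p.1 d p.2, p.1 d).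
have f_inv : involutive f by case=> x m; rewrite /f /= upd_upd upd_id upd_at.
rewrite !pair_big (reindex_inj (inv_inj f_inv)) /=.
by apply: eq_bigr => -[x m].
Qed.

Variables (R : realType) (w : 'I_N.+1 -> R).

Lemma wvol_face x d : wvol w x = w (x d) * wface w x d.
Proof. by rewrite /wvol /wface (bigD1 d). Qed.

Lemma wface_upd x d m : wface w (upd x d m) d = wface w x d.
Proof. by apply: eq_bigr => b bd; rewrite ffunE (negbTE bd). Qed.

Lemma sum_face_sgn d (h : node N -> R) : (0 < N)%N ->
  \sum_(x : node N) ((x d == ord_max)%:R - (x d == ord0)%:R) * h x =
  \sum_(s : bool) \sum_(x | face_node x d s) sgn s * h x.
Proof.
move=> N_gt0; have max_neq0 : (ord_max == ord0 :> 'I_N.+1) = false.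
  by apply/negbTE; rewrite -val_eqE /= -lt0n.
rewrite big_bool /= /face_node /sgn [X in _ = X + _]big_mkcond.
rewrite [X in _ = _ + X]big_mkcond -big_split /=.
apply: eq_bigr => x _; have [->|_] := eqVneq (x d) ord_max.
  by rewrite max_neq0 /=; ring.
by case: eqP => _ /=; ring.
Qed.

End TensorNodes.

Section TensorSummationByParts.
Variables (R : realType) (N : nat) (xi w : 'I_N.+1 -> R).
Hypothesis LGL : is_LGL xi w.

Lemma tensor_SBP d (F : node N -> node N -> R) :
  (forall x m, F (upd x d m) x = F x (upd x d m)) ->
  \sum_(x : node N) wvol w x * \sum_m Dmat xi (x d) m * F x (upd x d m) =
  1/2 * \sum_(s : bool) \sum_(x | face_node x d s) wface w x d * (sgn s * F x x).
Proof.
move=> F_sym; set L := LHS.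
pose T x m := wface w x d * F x (upd x d m).
have L_own : L = \sum_(x : node N) \sum_m w (x d) * Dmat xi (x d) m * T x m.
  apply: eq_bigr => x _; rewrite mulr_sumr; apply: eq_bigr => m _.
  by rewrite (wvol_face w x d) /T; ring.
have L_swapped : L = \sum_(x : node N) \sum_m w m * Dmat xi m (x d) * T x m.
  rewrite L_own (sum_upd_swap d); apply: eq_bigr => x _; apply: eq_bigr => m _.
  by rewrite /T upd_at wface_upd upd_upd upd_id F_sym.
have L2 : L + L =
    \sum_(x : node N) ((x d == ord_max)%:R - (x d == ord0)%:R) * (wface w x d * F x x).
  rewrite {1}L_own L_swapped -big_split /=; apply: eq_bigr => x _.
  rewrite -big_split /= (bigD1 (x d)) //= big1 => [|m m_neq].
    by rewrite -mulrDl Dmat_SBP // eqxx /T upd_id addr0.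
  by rewrite -mulrDl Dmat_SBP // [x d == m]eq_sym (negbTE m_neq) /= subrr mul0r.
have -> : L = 1/2 * (L + L) by field.
rewrite L2 (sum_face_sgn d (fun x => wface w x d * F x x)); last by case: LGL.
by congr (_ * _); apply: eq_bigr => s _; apply: eq_bigr => x _; rewrite mulrCA.
Qed.

Lemma dxi_avg_mul (f g : node N -> R) d (x : node N) :
  \sum_m Dmat xi (x d) m * (2 * avg (f x) (f (upd x d m)) * avg (g x) (g (upd x d m))) =
  1/2 * (dxi xi f d x * g x + f x * dxi xi g d x + dxi xi (fun y => f y * g y) d x).
Proof.
have -> : \sum_m Dmat xi (x d) m * (2 * avg (f x) (f (upd x d m)) * avg (g x) (g (upd x d m)))
    = 1/2 * \sum_m (f x * g x * Dmat xi (x d) m + g x * (Dmat xi (x d) m * f (upd x d m))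
        + f x * (Dmat xi (x d) m * g (upd x d m))
        + Dmat xi (x d) m * (f (upd x d m) * g (upd x d m))).
  by rewrite mulr_sumr; apply: eq_bigr => m _; rewrite /avg; field.
by rewrite /dxi !big_split /= -!mulr_sumr (Dmat_row_sum LGL) mulr0 add0r; ring.
Qed.

End TensorSummationByParts.

Lemma val_cmom b : nat_of_ord (cmom b) = b.+1.
Proof. by rewrite inordK //; have := ltn_ord b; lia. Qed.

Lemma val_cen : nat_of_ord cen = 4%N.
Proof. by rewrite inordK. Qed.

Lemma cmom_neq0 b : (cmom b == ord0) = false.
Proof. by rewrite -val_eqE /= val_cmom. Qed.

Lemma cmom_neq_cen b : (cmom b == cen) = false.
Proof. by rewrite -val_eqE /= val_cmom val_cen; case: b => -[|[|[]]]. Qed.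

Lemma cen_neq0 : (cen == ord0) = false.
Proof. by rewrite -val_eqE /= val_cen. Qed.

Lemma cmomK b : inord (cmom b).-1 = b.
Proof. by apply/val_inj; rewrite val_cmom /= inordK. Qed.

Lemma sum_state (V : nmodType) (f : 'I_5 -> V) :
  \sum_c f c = f ord0 + \sum_b f (cmom b) + f cen.
Proof.
rewrite big_ord_recl big_ord_recr /= addrA; congr (_ + _ + f _).
  by apply: eq_bigr => b _; congr f; apply/val_inj; rewrite /= val_cmom.
by apply/val_inj; rewrite /= val_cen.
Qed.

Lemma sum_vec3 (V : nmodType) (f : 'I_3 -> V) :
  \sum_b f b = f (inord 0) + f (inord 1) + f (inord 2).
Proof.
rewrite !big_ord_recr big_ord0 /= add0r.
by congr (f _ + f _ + f _); apply/val_inj; rewrite /= inordK.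
Qed.

Lemma sum_mul_delta (R : realType) (f : 'I_3 -> R) a :
  \sum_b f b * delta a b = f a.
Proof.
rewrite (bigD1 a) //= /delta eqxx mulr1 big1 ?addr0 // => b.
by rewrite eq_sym => /negbTE ->; rewrite mulr0.
Qed.

Lemma sum_mulr_exchange (R : pzSemiRingType) (I J : finType)
    (F : I -> J -> R) (phi : J -> R) :
  \sum_j (\sum_i F i j) * phi j = \sum_i \sum_j F i j * phi j.
Proof. by under eq_bigr do rewrite mulr_suml; rewrite exchange_big. Qed.

Section KineticEnergyVariables.
Variables (R : realType) (gamma : R).
Implicit Types (V W : state R).

Definition kin_var V : state R := fun c =>
  if c == ord0 then - (1/2 * speed2 V) else if c == cen then 0 else vel V (inord c.-1).

Lemma sum_kin_var (g : state R) V :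
  \sum_c g c * kin_var V c = - (1/2 * speed2 V) * g ord0 + \sum_b g (cmom b) * vel V b.
Proof.
rewrite sum_state /kin_var eqxx cen_neq0 eqxx mulr0 addr0 mulrC; congr (_ + _).
by apply: eq_bigr => b _; rewrite cmom_neq0 cmom_neq_cen cmomK.
Qed.

Lemma jameson_kin_var (G : state R) V W (P : R) (beta : 'I_3) :
  (forall b, G (cmom b) = G ord0 * avg (vel V b) (vel W b) + P * delta beta b) ->
  \sum_c G c * kin_var V c = G ord0 * (\sum_b vel V b * vel W b) / 2 + P * vel V beta.
Proof.
move=> G_mom; rewrite sum_kin_var.
under eq_bigr do rewrite G_mom mulrDl [P * _ * _]mulrAC.
rewrite big_split /= sum_mul_delta /speed2 /avg !sum_vec3; ring.
Qed.

Lemma ubar2E V W : ubar2 V W = \sum_b vel V b * vel W b.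
Proof. by rewrite /ubar2 /avg !sum_vec3; field. Qed.

Lemma mom_vel V b : rho V != 0 -> V (cmom b) = rho V * vel V b.
Proof. by move=> rho_neq0; rewrite /vel mulrC divfK. Qed.

Lemma flux_kin_var V (beta : 'I_3) (n : R) : rho V != 0 ->
  \sum_c (fluxF gamma beta V c - n * V c) * kin_var V c =
    (rho V * vel V beta - n * rho V) * speed2 V / 2 + pres gamma V * vel V beta.
Proof.
move=> rho_neq0; apply: jameson_kin_var => b.
by rewrite /= /fluxF eqxx cmom_neq0 cmom_neq_cen cmomK mom_vel // /avg -/(rho V); field.
Qed.

Lemma vel_scale (a : R) V b : a != 0 -> vel (fun c => a * V c) b = vel V b.
Proof.
move=> a_neq0; rewrite /vel /rho; have [->|rho_neq0] := eqVneq (V ord0) 0.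
  by rewrite mulr0 !invr0 !mulr0.
by field; rewrite rho_neq0 a_neq0.
Qed.

Lemma kin_scale (a : R) V : a != 0 -> kin (fun c => a * V c) = a * kin V.
Proof.
by move=> a_neq0; rewrite /kin /speed2; under eq_bigr do rewrite vel_scale //; rewrite /rho; ring.
Qed.

Lemma kin_var_scale (a : R) V : a != 0 -> kin_var (fun c => a * V c) = kin_var V.
Proof.
move=> a_neq0; rewrite /kin_var /speed2; under eq_bigr do rewrite vel_scale //.
by apply/funext => c; rewrite vel_scale.
Qed.

End KineticEnergyVariables.

Section TimeDerivative.
Variable R : realType.

Lemma is_derive_inv (f : R -> R) t df : f t != 0 -> is_derive t 1 f df ->
  is_derive t 1 (fun s => (f s)^-1) (- (f t) ^-2 * df).
Proof.
move=> ft_neq0 f_df; apply: DeriveDef.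
  by apply: derivableV => //; apply: ex_derive f_df.
by rewrite deriveV // derive_val.
Qed.

Lemma is_derive_bigsum (I : finType) (F : I -> R -> R) (dF : I -> R) (t : R) :
  (forall i, is_derive t 1 (F i) (dF i)) ->
  is_derive t 1 (fun s => \sum_i F i s) (\sum_i dF i).
Proof.
move=> F_dF; rewrite -fct_sumE.
by elim/big_ind2 : _ => // *; [exact: is_derive_cst | exact: is_deriveD].
Qed.

Lemma is_derive_kin (W : R -> state R) t (dW : state R) :
  rho (W t) != 0 -> (forall c, is_derive t 1 (fun s => W s c) (dW c)) ->
  is_derive t 1 (fun s => kin (W s)) (\sum_c dW c * kin_var (W t) c).
Proof.
move=> rho_neq0 W_dW; have scaleE (a b : R) : a *: b = a * b by [].
pose dvel b := (dW (cmom b) - vel (W t) b * dW ord0) / rho (W t).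
have vel_d b : is_derive t 1 (fun s => vel (W s) b) (dvel b).
  apply: is_derive_eq (is_deriveM (W_dW (cmom b)) (is_derive_inv rho_neq0 (W_dW ord0))) _.
  by rewrite !scaleE /dvel /vel -/(rho (W t)); field.
have speed2_d : is_derive t 1 (fun s => speed2 (W s)) (\sum_b 2 * vel (W t) b * dvel b).
  apply: is_derive_eq (is_derive_bigsum (fun b => is_deriveM (vel_d b) (vel_d b))) _.
  by apply: eq_bigr => b _; rewrite !scaleE; ring.
have kin_d := is_deriveM (is_deriveM (is_derive_cst (1/2 : R) t 1) (W_dW ord0)) speed2_d.
apply: is_derive_eq kin_d _.
rewrite !scaleE sum_kin_var /dvel /speed2 !sum_vec3 /=.
by rewrite -[(cst _ * _) t]/(1/2 * rho (W t)); field.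
Qed.

Lemma is_derive_kin_mul (J : R -> R) (V : R -> state R) t :
  (forall s, J s != 0) -> rho (V t) != 0 ->
  derivable J t 1 -> (forall c, derivable (fun s => V s c) t 1) ->
  is_derive t 1 (fun s => kin (V s) * J s)
    (\sum_c derive1 (fun s => J s * V s c) t * kin_var (V t) c).
Proof.
move=> J_neq0 rho_neq0 J_d V_d.
have -> : (fun s => kin (V s) * J s) = (fun s => kin (fun c => J s * V s c)).
  by apply/funext => s; rewrite kin_scale // mulrC.
rewrite -(kin_var_scale (V t) (J_neq0 t)).
apply: is_derive_kin => [|c]; first by rewrite /rho mulf_neq0.
by rewrite derive1E; apply/derivableP/derivableM.
Qed.

End TimeDerivative.

Section SurfaceIntegral.
Variables (R : realType) (N : nat) (w : 'I_N.+1 -> R).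

Lemma sum_nhat d s (Y : 'I_3 -> R) : \sum_k nhat d s k * Y k = sgn s * Y d.
Proof.
rewrite (bigD1 d) //= /nhat eqxx big1 ?addr0 // => k /negbTE kd.
by rewrite kd mul0r.
Qed.

Lemma cvecE (Ja : node N -> 'I_3 -> 'I_3 -> R) x d s beta :
  cvec Ja x d s beta = sgn s * Ja x d beta.
Proof. exact: sum_nhat. Qed.

Lemma shat_nvec (Ja : node N -> 'I_3 -> 'I_3 -> R) x d s beta :
  shat Ja x d s * nvec Ja x d s beta = cvec Ja x d s beta.
Proof.
rewrite /nvec mulrA; have [shat0|] := eqVneq (shat Ja x d s) 0; last first.
  by move=> ?; rewrite mulfV ?mul1r.
rewrite shat0 !mul0r; apply/esym/eqP; rewrite -sqrf_eq0.
move/eqP: shat0; rewrite sqrtr_eq0 => sum_le0.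
have sum0 : \sum_b cvec Ja x d s b ^+ 2 = 0.
  by apply/eqP; rewrite eq_le sum_le0 sumr_ge0 // => b _; apply: sqr_ge0.
by apply/eqP; move: sum0 => /psumr_eq0P; apply => // b _; apply: sqr_ge0.
Qed.

Lemma surf_intD h1 h2 :
  surf_int w h1 + surf_int w h2 = surf_int w (fun x d s => h1 x d s + h2 x d s).
Proof.
rewrite /surf_int -big_split; apply: eq_bigr => d _.
rewrite -big_split; apply: eq_bigr => s _.
by rewrite -big_split; apply: eq_bigr => x _; rewrite mulrDr.
Qed.

Lemma surf_int_sum (I : finType) (h : I -> node N -> 'I_3 -> bool -> R) :
  \sum_i surf_int w (h i) = surf_int w (fun x d s => \sum_i h i x d s).
Proof.
rewrite /surf_int exchange_big; apply: eq_bigr => d _.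
rewrite exchange_big; apply: eq_bigr => s _.
by rewrite exchange_big; apply: eq_bigr => x _; rewrite mulr_sumr.
Qed.

Lemma eq_surf_int h1 h2 :
  (forall x d s, face_node x d s -> h1 x d s = h2 x d s) ->
  surf_int w h1 = surf_int w h2.
Proof.
by move=> e; apply: eq_bigr => d _; apply: eq_bigr => s _; apply: eq_bigr => x /e ->.
Qed.

End SurfaceIntegral.

Section SpatialTerms.
Variables (R : realType) (N : nat) (gamma : R) (xi w : 'I_N.+1 -> R)
  (Gsharp : 'I_3 -> vec3 R -> vec3 R -> state R -> state R -> state R)
  (Gstar : 'I_3 -> vec3 R -> state R -> state R -> state R)
  (pstar : state R -> state R -> R)
  (U : node N -> state R) (Ja : node N -> 'I_3 -> 'I_3 -> R) (nu : node N -> vec3 R)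
  (Uext : node N -> 'I_3 -> bool -> state R).
Hypothesis LGL : is_LGL xi w.
Hypothesis Gsharp_sym : forall iota nL nR UL UR, 0 < rho UL -> 0 < rho UR ->
  Gsharp iota nL nR UL UR = Gsharp iota nR nL UR UL.
Hypothesis Gsharp_cons : forall iota nL nR V, 0 < rho V ->
  Gsharp iota nL nR V V = fun c => fluxF gamma iota V c - avg (nL iota) (nR iota) * V c.
Hypothesis Gsharp_jameson : forall iota ups nL nR UL UR, 0 < rho UL -> 0 < rho UR ->
  Gsharp iota nL nR UL UR (cmom ups) =
    Gsharp iota nL nR UL UR ord0 * avg (vel UL ups) (vel UR ups)
    + avg (pres gamma UL) (pres gamma UR) * delta iota ups.
Hypothesis Gstar_jameson : forall iota ups n Um Up, 0 < rho Um -> 0 < rho Up ->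
  Gstar iota n Um Up (cmom ups) =
    Gstar iota n Um Up ord0 * avg (vel Up ups) (vel Um ups) + pstar Um Up * delta iota ups.
Hypothesis rho_U_gt0 : forall x, 0 < rho (U x).
Hypothesis rho_Uext_gt0 : forall x d s, face_node x d s -> 0 < rho (Uext x d s).

Let mass2 d beta x y := avg (Ja x d beta) (Ja y d beta) *
  Gsharp beta (nu x) (nu y) (U x) (U y) ord0 * \sum_b vel (U x) b * vel (U y) b.
Let pres2 d beta x y := 2 * avg (pres gamma (U x)) (pres gamma (U y)) *
  avg (Ja x d beta) (Ja y d beta) * vel (U x) beta.

Lemma volD_kin_var x : \sum_c volD xi Gsharp nu Ja U x c * kin_var (U x) c =
  \sum_d \sum_beta \sum_m Dmat xi (x d) m *
    (mass2 d beta x (upd x d m) + pres2 d beta x (upd x d m)).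
Proof.
rewrite /volD sum_mulr_exchange.
under eq_bigr do rewrite sum_mulr_exchange.
under eq_bigr do under eq_bigr do rewrite sum_mulr_exchange.
have contract m beta d : \sum_c 2 * Dmat xi (x d) m *
      Gsharp beta (nu x) (nu (upd x d m)) (U x) (U (upd x d m)) c *
      avg (Ja x d beta) (Ja (upd x d m) d beta) * kin_var (U x) c =
    Dmat xi (x d) m * (mass2 d beta x (upd x d m) + pres2 d beta x (upd x d m)).
  set G := Gsharp beta _ _ _ _.
  set K := 2 * Dmat xi (x d) m * avg (Ja x d beta) (Ja (upd x d m) d beta).
  rewrite (eq_bigr (fun c => G c * kin_var (U x) c * K)) => [|c _]; last by rewrite /K; ring.
  rewrite -mulr_suml (jameson_kin_var (W := U (upd x d m))
    (P := avg (pres gamma (U x)) (pres gamma (U (upd x d m)))) (beta := beta)) => [|b].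
    by rewrite /mass2 /pres2 /K /G; field.
  exact: Gsharp_jameson.
under eq_bigr do under eq_bigr do under eq_bigr do rewrite contract.
rewrite exchange_big /=; under eq_bigr do rewrite exchange_big /=.
by rewrite exchange_big.
Qed.

Lemma ip_volD_kin_var : ip w (volD xi Gsharp nu Ja U) (fun x => kin_var (U x)) =
  \sum_d \sum_beta \sum_x wvol w x * \sum_m Dmat xi (x d) m * mass2 d beta x (upd x d m)
  + \sum_d \sum_beta \sum_x wvol w x * \sum_m Dmat xi (x d) m * pres2 d beta x (upd x d m).
Proof.
rewrite /ip; under eq_bigr do rewrite volD_kin_var !mulr_sumr.
rewrite exchange_big -big_split /=; apply: eq_bigr => d _.
under eq_bigr do rewrite mulr_sumr.
rewrite exchange_big -big_split /=; apply: eq_bigr => beta _.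
rewrite -big_split /=; apply: eq_bigr => x _.
by rewrite -mulrDr -big_split /=; under eq_bigr do rewrite mulrDr.
Qed.

Lemma mass2_sym d beta x m : mass2 d beta (upd x d m) x = mass2 d beta x (upd x d m).
Proof.
rewrite /mass2 Gsharp_sym // /avg addrC; congr (_ * _ * _).
by apply: eq_bigr => b _; rewrite mulrC.
Qed.

Lemma vol_mass_SBP :
  \sum_d \sum_beta \sum_x wvol w x * \sum_m Dmat xi (x d) m * mass2 d beta x (upd x d m)
  = surf_int w (fun x d s => \sum_beta 1/2 * (sgn s * mass2 d beta x x)).
Proof.
under eq_bigr do under eq_bigr do rewrite (tensor_SBP LGL (@mass2_sym _ _)).
rewrite exchange_big -surf_int_sum; apply: eq_bigr => beta _.
apply: eq_bigr => d _; rewrite mulr_sumr; apply: eq_bigr => s _.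
by rewrite mulr_sumr; apply: eq_bigr => x _; ring.
Qed.

Lemma vol_pres_split :
  \sum_d \sum_beta \sum_x wvol w x * \sum_m Dmat xi (x d) m * pres2 d beta x (upd x d m)
  = 1/2 * \sum_iota ip3 w
      (fun x beta =>
         dxi xi (fun y => pres gamma (U y)) iota x * Ja x iota beta
         + pres gamma (U x) * dxi xi (fun y => Ja y iota beta) iota x
         + dxi xi (fun y => pres gamma (U y) * Ja y iota beta) iota x)
      (fun x beta => vel (U x) beta).
Proof.
rewrite mulr_sumr; apply: eq_bigr => d _.
rewrite /ip3 exchange_big mulr_sumr; apply: eq_bigr => x _.
rewrite !mulr_sumr; apply: eq_bigr => beta _.
have := dxi_avg_mul LGL (fun y => pres gamma (U y)) (fun y => Ja y d beta) d x.
rewrite /pres2 /= => split_id.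
by under eq_bigr do rewrite mulrA; rewrite -mulr_suml split_id; ring.
Qed.

Lemma Gstarn_kin_var x d s : face_node x d s ->
  \sum_c Gstarn Gstar nu Ja U Uext x d s c * kin_var (U x) c =
  \sum_beta cvec Ja x d s beta * (1/2 * ubar2 (U x) (Uext x d s)
     * Gstar beta (nu x) (U x) (Uext x d s) ord0 + pstar (U x) (Uext x d s) * vel (U x) beta).
Proof.
move=> face; rewrite /Gstarn.
under eq_bigr do rewrite mulr_sumr mulr_suml.
rewrite exchange_big /=; apply: eq_bigr => beta _.
set G := Gstar beta _ _ _.
rewrite (eq_bigr (fun c => shat Ja x d s * nvec Ja x d s beta * (G c * kin_var (U x) c)))
  => [|c _]; last by ring.
rewrite -mulr_sumr shat_nvec (jameson_kin_var (W := Uext x d s)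
  (P := pstar (U x) (Uext x d s)) (beta := beta)) => [|b].
  by rewrite ubar2E; field.
by rewrite /G Gstar_jameson ?rho_Uext_gt0 // /avg [vel _ b + _]addrC.
Qed.

Lemma Gtn_kin_var x d s :
  \sum_c Gtn gamma nu Ja U x d s c * kin_var (U x) c =
  \sum_beta cvec Ja x d s beta * ((rho (U x) * vel (U x) beta - nu x beta * rho (U x))
     * speed2 (U x) / 2 + pres gamma (U x) * vel (U x) beta).
Proof.
rewrite /Gtn; under eq_bigr do rewrite sum_nhat mulr_sumr mulr_suml.
rewrite exchange_big /=; apply: eq_bigr => beta _.
rewrite cvecE -flux_kin_var ?gt_eqF // mulr_sumr.
by apply: eq_bigr => c _; ring.
Qed.

Lemma surf_kin_var x d s : face_node x d s ->
  \sum_beta 1/2 * (sgn s * mass2 d beta x x)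
  + \sum_c kin_var (U x) c * (Gstarn Gstar nu Ja U Uext x d s c - Gtn gamma nu Ja U x d s c)
  = \sum_iota shat Ja x d s * nvec Ja x d s iota *
      (1/2 * ubar2 (U x) (Uext x d s) * Gstar iota (nu x) (U x) (Uext x d s) ord0
       + (pstar (U x) (Uext x d s) - pres gamma (U x)) * vel (U x) iota).
Proof.
move=> face.
rewrite (eq_bigr (fun c => Gstarn Gstar nu Ja U Uext x d s c * kin_var (U x) c
    - Gtn gamma nu Ja U x d s c * kin_var (U x) c)) => [|c _]; last by ring.
rewrite sumrB Gstarn_kin_var // Gtn_kin_var addrA -big_split -sumrB /=.
apply: eq_bigr => beta _.
by rewrite shat_nvec cvecE /mass2 Gsharp_cons // /fluxF eqxx /avg -/(rho (U x))
  -[\sum_b _ * _]/(speed2 (U x)); field.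
Qed.

Lemma spatial_kin_var :
  ip w (volD xi Gsharp nu Ja U) (fun x => kin_var (U x))
  + surf_int w (fun x d s => \sum_c kin_var (U x) c *
      (Gstarn Gstar nu Ja U Uext x d s c - Gtn gamma nu Ja U x d s c))
  = 1/2 * \sum_iota ip3 w
      (fun x beta =>
         dxi xi (fun y => pres gamma (U y)) iota x * Ja x iota beta
         + pres gamma (U x) * dxi xi (fun y => Ja y iota beta) iota x
         + dxi xi (fun y => pres gamma (U y) * Ja y iota beta) iota x)
      (fun x beta => vel (U x) beta)
    + \sum_iota surf_int w (fun x d s =>
        shat Ja x d s * nvec Ja x d s iota *
          (1/2 * ubar2 (U x) (Uext x d s) * Gstar iota (nu x) (U x) (Uext x d s) ord0
           + (pstar (U x) (Uext x d s) - pres gamma (U x)) * vel (U x) iota)).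
Proof.
rewrite ip_volD_kin_var vol_mass_SBP vol_pres_split surf_int_sum.
rewrite [surf_int w _ + _]addrC -addrA surf_intD; congr (_ + _).
exact/eq_surf_int/surf_kin_var.
Qed.

End SpatialTerms.

Lemma derive1_kin_energy (R : realType) (N : nat) (w : 'I_N.+1 -> R)
  (Jac : R -> node N -> R) (U : R -> node N -> state R) t :
  (forall x, 0 < rho (U t x)) -> (forall s x, 0 < Jac s x) ->
  (forall x, derivable (fun s => Jac s x) t 1) ->
  (forall x c, derivable (fun s => U s x c) t 1) ->
  derive1 (fun s => \sum_x wvol w x * kin (U s x) * Jac s x) t =
  ip w (fun x c => derive1 (fun s => Jac s x * U s x c) t) (fun x => kin_var (U t x)).
Proof.
move=> rho_gt0 Jac_gt0 Jac_d U_d.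
have node_d x : is_derive t 1 (fun s => wvol w x * kin (U s x) * Jac s x)
    (wvol w x * \sum_c derive1 (fun s => Jac s x * U s x c) t * kin_var (U t x) c).
  have -> : (fun s => wvol w x * kin (U s x) * Jac s x) =
      (fun s => wvol w x * (kin (U s x) * Jac s x)) by apply/funext => s; rewrite mulrA.
  have kin_d := is_derive_kin_mul (fun s => lt0r_neq0 (Jac_gt0 s x))
    (lt0r_neq0 (rho_gt0 x)) (Jac_d x) (U_d x).
  apply: is_derive_eq (is_deriveM (is_derive_cst (wvol w x) t 1) kin_d) _.
  by rewrite scaler0 addr0.
have sum_d := is_derive_bigsum node_d.
by rewrite derive1E derive_val.
Qed.

Theorem theorem3p1 (R : realType) (N : nat) (gamma : R) (xi w : 'I_N.+1 -> R)
  (Gsharp : 'I_3 -> vec3 R -> vec3 R -> state R -> state R -> state R)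
  (Gstar : 'I_3 -> vec3 R -> state R -> state R -> state R)
  (pstar : state R -> state R -> R)
  (Jac : R -> node N -> R) (U : R -> node N -> state R)
  (Ja : R -> node N -> 'I_3 -> 'I_3 -> R) (nu : R -> node N -> vec3 R)
  (Uext : R -> node N -> 'I_3 -> bool -> state R) :
  1 < gamma ->
  is_LGL xi w ->
  (* symmetry and consistency of the volume fluxes *)
  (forall iota nL nR UL UR, 0 < rho UL -> 0 < rho UR ->
     Gsharp iota nL nR UL UR = Gsharp iota nR nL UR UL) ->
  (forall iota nL nR V, 0 < rho V ->
     Gsharp iota nL nR V V = fun c => fluxF gamma iota V c - avg (nL iota) (nR iota) * V c) ->
  (* Jameson's condition for the volume fluxes *)
  (forall iota ups nL nR UL UR, 0 < rho UL -> 0 < rho UR ->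
     Gsharp iota nL nR UL UR (cmom ups) =
       Gsharp iota nL nR UL UR ord0 * avg (vel UL ups) (vel UR ups)
       + avg (pres gamma UL) (pres gamma UR) * delta iota ups) ->
  (* consistent pressure trace and Jameson's condition for the surface fluxes *)
  (forall V, 0 < rho V -> pstar V V = pres gamma V) ->
  (forall iota ups n Um Up, 0 < rho Um -> 0 < rho Up ->
     Gstar iota n Um Up (cmom ups) =
       Gstar iota n Um Up ord0 * avg (vel Up ups) (vel Um ups)
       + pstar Um Up * delta iota ups) ->
  (* surface mass flux consistent with rho (u_iota - nu_iota) *)
  (forall iota n V, 0 < rho V -> Gstar iota n V V ord0 = rho V * (vel V iota - n iota)) ->
  (* physical states and positive Jacobian *)
  (forall t x, 0 < rho (U t x)) ->
  (forall t x d s, face_node x d s -> 0 < rho (Uext t x d s)) ->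
  (forall t x, 0 < Jac t x) ->
  (* time differentiability of the nodal values *)
  (forall x t, derivable (fun t' => Jac t' x) t 1) ->
  (forall x c t, derivable (fun t' => U t' x c) t 1) ->
  (* the split form ALE DGSEM (for all test functions, given by their nodal values) *)
  (forall t (phi : node N -> state R),
     ip w (fun x c => derive1 (fun t' => Jac t' x * U t' x c) t) phi =
       - ip w (volD xi Gsharp (nu t) (Ja t) (U t)) phi
       - surf_int w (fun x d s =>
           \sum_c phi x c * (Gstarn Gstar (nu t) (Ja t) (U t) (Uext t) x d s c
                             - Gtn gamma (nu t) (Ja t) (U t) x d s c))) ->
  forall t,
    derive1 (fun t' => \sum_x wvol w x * kin (U t' x) * Jac t' x) t =
      - 1/2 * \sum_iota ip3 w
          (fun x beta =>
             dxi xi (fun y => pres gamma (U t y)) iota x * Ja t x iota beta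
             + pres gamma (U t x) * dxi xi (fun y => Ja t y iota beta) iota x
             + dxi xi (fun y => pres gamma (U t y) * Ja t y iota beta) iota x)
          (fun x beta => vel (U t x) beta)
      - \sum_iota surf_int w (fun x d s =>
          shat (Ja t) x d s * nvec (Ja t) x d s iota *
            (1/2 * ubar2 (U t x) (Uext t x d s)
                 * Gstar iota (nu t x) (U t x) (Uext t x d s) ord0
             + (pstar (U t x) (Uext t x d s) - pres gamma (U t x)) * vel (U t x) iota)).
Proof.
(* Neither gamma > 1 nor the consistency of the surface fluxes enters this identity. *)
move=> _ LGL Gsharp_sym Gsharp_cons Gsharp_jameson _ Gstar_jameson _
  rho_U_gt0 rho_Uext_gt0 Jac_gt0 Jac_d U_d scheme t.
rewrite (derive1_kin_energy w (rho_U_gt0 t) Jac_gt0 (Jac_d ^~ t) (fun x c => U_d x c t)).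
rewrite scheme -opprD (spatial_kin_var (Ja t) (nu t) LGL Gsharp_sym Gsharp_cons
  Gsharp_jameson Gstar_jameson (rho_U_gt0 t) (rho_Uext_gt0 t)).
by ring.
Qed.
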